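(* Fix a block $i\in\{1,\dots,N\}$, a battery state $\epsilon$ and a G-channel state $\gamma_G$. If $\gamma_H^-\le\gamma_H^+$ are H-channel states and the action $\alpha=1$ is optimal in block $i$ at state $\langle\epsilon,\gamma_G,\gamma_H^-\rangle$, then $\alpha=1$ is optimal in block $i$ at state $\langle\epsilon,\gamma_G,\gamma_H^+\rangle$. Equivalently, the optimal policy is monotone in $\gamma_H$: there is a threshold $\Gamma_{H,i}(\epsilon,\gamma_G)$ such that the EH-BS is assigned ($\alpha=1$) only when $\gamma_H\ge\Gamma_{H,i}(\epsilon,\gamma_G)$.
   Context: Finite-horizon MDP with $N$ blocks of length $\tau>0$. Parameters: $B_m>0$, positive integers $M,K$; channel levels $0<H_1<\dots<H_K$; $R,W,\sigma^2,g_0,\theta,d_G,d_H>0$; $p_G^{\max},p_H^{\max}>0$; weights $w_G,w_D>0$; $E_{H}$ a random variable with density $f_{E_H}$ on $[0,E_m]$. A state is $s=\langle\epsilon,\gamma_G,\gamma_H\rangle$ with $\epsilon\in\{(2m-1)B_m/(2M): m=1,\dots,M\}$ and $\gamma_G,\gamma_H\in\{H_1,\dots,H_K\}$. Let $p^{inv}_j(s)=(2^{R/(W\tau)}-1)\sigma^2(g_0 d_j^{-\theta}\gamma_j)^{-1}$ for $j\in\{G,H\}$, $\kappa=\min\{p_G^{\max},w_D(w_G\tau)^{-1}\}$, and $c(s)=w_D$ if $p^{inv}_G(s)>\kappa$, $c(s)=w_G p^{inv}_G(s)\tau$ otherwise. The allowable actions are $\mathcal{A}_s=\{0\}$ if $p^{inv}_H(s)>\min\{\epsilon/\tau,p_H^{\max}\}$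 and $\mathcal{A}_s=\{0,1\}$ otherwise; the cost is $c(s,\alpha)=(1-\alpha)c(s)$. Transitions: given $s$ and $\alpha$, the next channel states $\gamma_G',\gamma_H'$ are independent, each uniform on $\{H_1,\dots,H_K\}$, independent of the next energy state $\epsilon'=Q(\epsilon-\alpha p^{inv}_H(s)\tau+E_H)$, where $Q(\varepsilon)=\big(2\min\{\lfloor M\min\{\varepsilon,B_m\}/B_m\rfloor+1,M\}-1\big)B_m/(2M)$; denote the resulting transition probability $p(s'|s,\alpha)$. Optimal cost-to-go functions: $u_N^*(s)=\min_{\alpha\in\mathcal{A}_s}c(s,\alpha)$ and, for $i<N$, $u_i^*(s)=\min_{\alpha\in\mathcal{A}_s}\{c(s,\alpha)+\sum_{s'}p(s'|s,\alpha)u_{i+1}^*(s')\}$. Action $\alpha$ is optimal in block $i$ at state $s$ if $\alpha\in\mathcal{A}_s$ and it attains the minimum in the defining equation of $u_i^*(s)$. *)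

From HB Require Import structures.
From mathcomp Require Import all_boot all_order all_algebra.
From mathcomp Require Import all_classical all_reals all_analysis.
Set Implicit Arguments. Unset Strict Implicit. Unset Printing Implicit Defensive.
Import Order.TTheory GRing.Theory Num.Theory.
Local Open Scope ring_scope.
Local Open Scope classical_set_scope.

Record mdp (R : realType) := Mdp {
  N : nat;            (* number of blocks *)
  tau : R;            (* block length *)
  Bm : R;             (* battery capacity *)
  M : nat;            (* number of battery levels *)
  K : nat;            (* number of channel levels *)
  Hlev : 'I_K -> R;   (* channel levels H_1 < ... < H_K *)
  Rr : R; W : R; sigma2 : R; g0 : R; theta : R; dG : R; dH : R;
  pGmax : R; pHmax : R; wG : R; wD : R;
  Em : R;             (* E_H takes values in [0, Em] *)
  fEH : R -> R        (* density of E_H *)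
}.

Section MDP.
Variables (R : realType) (P : mdp R).

(* state <eps, gamma_G, gamma_H>, encoded by indices (0-based):
   eps = (2m+1) Bm / (2M), gamma_G = Hlev g, gamma_H = Hlev h *)
Definition state : finType := ('I_(M P) * 'I_(K P) * 'I_(K P))%type.

Definition eps_lev (m : nat) : R := (2 * m%:R + 1) * Bm P / (2 * (M P)%:R).
Definition eps_of (s : state) : R := eps_lev s.1.1.
Definition gG_of (s : state) : R := Hlev s.1.2.
Definition gH_of (s : state) : R := Hlev s.2.

Definition pinv (d gamma : R) : R :=
  (2 `^ (Rr P / (W P * tau P)) - 1) * sigma2 P / (g0 P * d `^ (- theta P) * gamma).
Definition pinvG (s : state) : R := pinv (dG P) (gG_of s).
Definition pinvH (s : state) : R := pinv (dH P) (gH_of s).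

Definition kappa : R := Num.min (pGmax P) (wD P / (wG P * tau P)).

Definition cost0 (s : state) : R :=
  if pinvG s > kappa then wD P else wG P * pinvG s * tau P.

(* actions: false = 0, true = 1 *)
Definition allowed (s : state) (a : bool) : bool :=
  ~~ a || (pinvH s <= Num.min (eps_of s / tau P) (pHmax P)).

Definition cost (s : state) (a : bool) : R := (1 - (a : nat)%:R) * cost0 s.

Definition Qz (e : R) : R :=
  let q : int := Num.min (Num.floor ((M P)%:R * Num.min e (Bm P) / Bm P) + 1)
                         ((M P)%:Z) in
  (2 * q - 1)%:~R * Bm P / (2 * (M P)%:R).

Definition probEH (A : set R) : R :=
  fine (\int[@lebesgue_measure R]_(x in A) (fEH P x)%:E)%E.

Definition next_energy (s : state) (a : bool) (e : R) : R :=
  Qz (eps_of s - (a : nat)%:R * pinvH s * tau P + e).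

Definition trans (s : state) (a : bool) (s' : state) : R :=
  ((K P)%:R^-1) * ((K P)%:R^-1) *
  probEH [set e | next_energy s a e = eps_of s'].

(* Backward recursion indexed by n = N - i (number of blocks after block i).
   qval n s a is the quantity minimized in the equation defining u_i^*(s). *)
Fixpoint ustar_rem (n : nat) (s : state) : R :=
  let q := fun a : bool =>
    match n with
    | 0 => cost s a
    | n'.+1 => cost s a + \sum_(s' : state) trans s a s' * ustar_rem n' s'
    end in
  if allowed s true then Num.min (q false) (q true) else q false.

Definition qval (n : nat) (s : state) (a : bool) : R :=
  match n with
  | 0 => cost s a
  | n'.+1 => cost s a + \sum_(s' : state) trans s a s' * ustar_rem n' s'
  end.

Definition ustar (i : nat) (s : state) : R := ustar_rem (N P - i) s.

Definition optimal (i : nat) (s : state) (a : bool) : Prop :=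
  allowed s a /\
  qval (N P - i) s a = ustar i s.

End MDP.

Definition supp_int (R : realType) (Em : R) : set R := `[0%R, Em].

From Pilot Require Import Defs.
From HB Require Import structures.
From mathcomp Require Import all_boot all_order all_algebra.
From mathcomp Require Import all_classical all_reals all_analysis.
From mathcomp Require Import measurable_realfun zify.
Import Order.TTheory GRing.Theory Num.Theory.
Local Open Scope ring_scope.
Local Open Scope classical_set_scope.

(* Choosing alpha = 0 has the same cost and the same next-state distribution
   whatever gamma_H is, while alpha = 1 costs nothing now and leaves the
   battery at epsilon - p^inv_H tau, which grows with gamma_H.  Backward
   induction shows that every u_i^* is nonincreasing in the battery level: the
   quantizer Q is monotone, so a larger pre-harvest energy makes the next
   battery level larger for every harvested amount E_H, and averaging a
   nonincreasing function against the density of E_H preserves the order.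
   Hence the value of alpha = 1 at gamma_H^+ is at most its value at gamma_H^-,
   which is at most the common value of alpha = 0. *)

Section EnergyHarvestingMDP.
Variables (R : realType) (P : mdp R).
Hypotheses (hBm : 0 < Bm P) (hM : (0 < M P)%N).

Lemma ler_eps_lev (a b : nat) : (eps_lev P a <= eps_lev P b) = (a <= b)%N.
Proof.
rewrite /eps_lev ler_pM2r; last by rewrite invr_gt0 mulr_gt0 // ltr0n.
by rewrite ler_pM2r // lerD2r ler_pM2l // ler_nat.
Qed.

Lemma eps_lev_inj : injective (eps_lev P).
Proof.
by move=> a b eq_ab; apply/eqP; rewrite eqn_leq -!ler_eps_lev eq_ab lexx.
Qed.

Lemma Qz_nondecreasing : {homo Qz P : x y / x <= y}.
Proof.
move=> x y le_xy; rewrite /Qz /=; apply: ler_wpM2r.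
  by rewrite invr_ge0 mulr_ge0 // ler0n.
apply: ler_wpM2r; first exact: ltW.
have : Num.floor ((M P)%:R * Num.min x (Bm P) / Bm P) <=
       Num.floor ((M P)%:R * Num.min y (Bm P) / Bm P).
  apply: le_floor; apply: ler_wpM2r; first by rewrite invr_ge0 ltW.
  by apply: ler_wpM2l; [exact: ler0n | exact: le_min2].
rewrite ler_int; set a := Num.floor _; set b := Num.floor _ => le_ab.
have : Num.min (a + 1) (M P)%:Z <= Num.min (b + 1) (M P)%:Z.
  by apply: le_min2 => //; rewrite lerD2r.
set u := Num.min _ _; set v := Num.min _ _; lia.
Qed.

Lemma Qz_level z : 0 <= z -> exists j : 'I_(M P), Qz P z = eps_lev P j.
Proof.
move=> z_ge0; rewrite /Qz /=.
set a := Num.floor _.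
have a_ge0 : 0 <= a.
  rewrite floor_ge0; apply: mulr_ge0; last by rewrite invr_ge0 ltW.
  by apply: mulr_ge0; [exact: ler0n | rewrite le_min z_ge0 ltW].
set q := Num.min (a + 1) (M P)%:Z.
have q_ge1 : 1 <= q by rewrite le_min lerDr a_ge0 /=; lia.
have q_leM : q <= (M P)%:Z by rewrite ge_min lexx orbT.
have ltjM : (`|q - 1|%N < M P)%N by lia.
exists (Ordinal ltjM); rewrite /eps_lev /=.
have -> : 2 * q - 1 = (2 * `|q - 1|%N + 1)%N%:Z by lia.
by rewrite -pmulrn natrD natrM.
Qed.

Hypotheses (hfmeas : measurable_fun setT (fEH P))
  (hfpos : forall x, 0 <= fEH P x)
  (hfsupp : forall x, ~ (0 <= x <= Em P) -> fEH P x = 0)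
  (hfint : (\int[@lebesgue_measure R]_(x in supp_int (Em P)) (fEH P x)%:E
            = 1)%E).

Let mu := @lebesgue_measure R.

Definition level_set (z : R) (j : nat) : set R :=
  [set e | Qz P (z + e) = eps_lev P j].

Lemma measurable_level_set z j : measurable (level_set z j).
Proof.
have mQ : measurable_fun setT (fun e => Qz P (z + e)).
  apply: nondecreasing_measurable => // x y le_xy.
  by rewrite Qz_nondecreasing ?lerD2l.
by rewrite -[level_set z j]setTI; exact: mQ (measurable_set1 _).
Qed.

Lemma integral_density_le1 (A : set R) : measurable A ->
  (\int[mu]_(e in A) (fEH P e)%:E <= 1)%E.
Proof.
move=> mA; have -> : 1%E = (\int[mu]_e (fEH P e)%:E)%E.
  rewrite -hfint integral_mkcond; apply: eq_integral => e _.
  rewrite /patch; case: ifPn => // /negP e_out; rewrite hfsupp // => e_in.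
  by apply: e_out; rewrite /supp_int in_setE /= in_itv.
apply: ge0_subset_integral => //; first exact/measurable_EFinP.
by move=> e _; rewrite lee_fin.
Qed.

Lemma integral_density_fin_num (A : set R) : measurable A ->
  (\int[mu]_(e in A) (fEH P e)%:E)%E \is a fin_num.
Proof.
move=> mA; rewrite ge0_fin_numE; last first.
  by apply: integral_ge0 => e _; rewrite lee_fin.
by rewrite (le_lt_trans (integral_density_le1 A mA)) // ltry.
Qed.

Lemma integral_density_indic (A : set R) (c : R) : measurable A -> 0 <= c ->
  (\int[mu]_e (fEH P e * c * \1_A e)%:E = (probEH P A * c)%:E)%E.
Proof.
move=> mA c_ge0; rewrite EFinM /probEH fineK ?integral_density_fin_num //.
rewrite -ge0_integralZr //; last 2 first.
- by apply/measurable_EFinP; exact: measurable_funS hfmeas.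
- by move=> e _; rewrite lee_fin.
rewrite -[in RHS](setTI A) integral_mkcondr epatch_indic.
by apply: eq_integral => e _; rewrite !EFinM.
Qed.

Lemma measurable_level_term z (c : R) j :
  measurable_fun setT (fun e => c * \1_(level_set z j) e).
Proof.
apply: measurable_funM; first exact: measurable_cst.
exact: measurable_indic (measurable_level_set z j).
Qed.

Lemma integral_level_sets z (phi : 'I_(M P) -> R) : (forall j, 0 <= phi j) ->
  (\int[mu]_e (fEH P e * \sum_(j : 'I_(M P)) phi j * \1_(level_set z j) e)%:E =
   (\sum_(j : 'I_(M P)) probEH P (level_set z j) * phi j)%:E)%E.
Proof.
move=> phi_ge0.
under eq_integral do rewrite mulr_sumr -sumEFin.
rewrite ge0_integral_sum //; last 2 first.
- move=> j; apply/measurable_EFinP; apply: measurable_funM => //.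
  exact: measurable_level_term.
- by move=> j e _; rewrite lee_fin mulr_ge0 ?indicE ?mulr_ge0.
rewrite -sumEFin; apply: eq_bigr => j _.
rewrite -(integral_density_indic _ _ (measurable_level_set z j)) //.
by apply: eq_integral => e _; rewrite mulrA.
Qed.

Lemma sum_indic_level_set (phi : 'I_(M P) -> R) [z e : R] [j : 'I_(M P)] :
  Qz P (z + e) = eps_lev P j ->
  \sum_(k : 'I_(M P)) phi k * \1_(level_set z k) e = phi j.
Proof.
move=> Qj; rewrite (bigD1 j) //= big1 ?addr0 => [|k /eqP neq_kj].
  by rewrite indicE mem_set ?mulr1.
rewrite indicE memNset ?mulr0 // /level_set /= Qj => /eps_lev_inj/val_inj eq_jk.
by apply: neq_kj; rewrite eq_jk.
Qed.

Lemma expected_level_antitone x y (phi : 'I_(M P) -> R) : 0 <= x -> x <= y ->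
  (forall j, 0 <= phi j) -> {homo phi : j k / (j <= k)%N >-> k <= j} ->
  \sum_(j : 'I_(M P)) probEH P (level_set y j) * phi j <=
  \sum_(j : 'I_(M P)) probEH P (level_set x j) * phi j.
Proof.
move=> x_ge0 le_xy phi_ge0 phi_anti.
pose F z e := fEH P e * \sum_(j : 'I_(M P)) phi j * \1_(level_set z j) e.
suff : (\int[mu]_e (F y e)%:E <= \int[mu]_e (F x e)%:E)%E.
  by rewrite !integral_level_sets // lee_fin.
have mF z : measurable_fun setT (fun e => (F z e)%:E).
  apply/measurable_EFinP; apply: measurable_funM => //.
  by apply: measurable_sum => j; exact: measurable_level_term.
apply: ge0_le_integral => //; [move=> e _ | exact: mF | exact: mF | move=> e _].
  by rewrite lee_fin mulr_ge0 ?sumr_ge0 // => j _; rewrite mulr_ge0 ?indicE.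
rewrite lee_fin /F.
(* [Qz] lands on a battery level only for nonnegative arguments, hence the
   split on the support of the density. *)
have [/andP[e_ge0 _]|e_out] := boolP (0 <= e <= Em P); last first.
  by rewrite hfsupp ?mul0r //; exact/negP.
have [jx Qx] := Qz_level _ (addr_ge0 x_ge0 e_ge0).
have [jy Qy] := Qz_level _ (addr_ge0 (le_trans x_ge0 le_xy) e_ge0).
rewrite (sum_indic_level_set phi Qx) (sum_indic_level_set phi Qy) ler_wpM2l //.
by apply: phi_anti; rewrite -ler_eps_lev -Qx -Qy Qz_nondecreasing ?lerD2r.
Qed.

Hypotheses (htau : 0 < tau P) (hRr : 0 < Rr P) (hW : 0 < W P)
  (hsig : 0 < sigma2 P) (hg0 : 0 < g0 P) (hdG : 0 < dG P) (hdH : 0 < dH P)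
  (hwG : 0 < wG P) (hwD : 0 < wD P) (hHpos : forall j : 'I_(K P), 0 < Hlev j).

Lemma pinv_numerator_ge0 : 0 <= (2 `^ (Rr P / (W P * tau P)) - 1) * sigma2 P.
Proof.
apply: mulr_ge0; last exact: ltW.
rewrite subr_ge0 -[X in X <= _](powRr0 2).
apply: ler_powR; first by rewrite ler1n.
by rewrite ltW // divr_gt0 // mulr_gt0.
Qed.

Lemma pinv_ge0 d gamma : 0 < d -> 0 < gamma -> 0 <= Defs.pinv P d gamma.
Proof.
move=> d_gt0 gamma_gt0; apply: divr_ge0; first exact: pinv_numerator_ge0.
by rewrite ltW // !mulr_gt0 // powR_gt0.
Qed.

Lemma le_pinv d gamma1 gamma2 : 0 < d -> 0 < gamma1 -> gamma1 <= gamma2 ->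
  Defs.pinv P d gamma2 <= Defs.pinv P d gamma1.
Proof.
move=> d_gt0 gamma1_gt0 le_gamma.
apply: ler_wpM2l; first exact: pinv_numerator_ge0.
have gamma2_gt0 := lt_le_trans gamma1_gt0 le_gamma.
by rewrite lef_pV2 ?posrE ?ler_pM2l ?mulr_gt0 ?powR_gt0.
Qed.

Lemma cost_true (s : state P) : cost s true = 0.
Proof. by rewrite /cost subrr mul0r. Qed.

Lemma cost_ge0 (s : state P) a : 0 <= cost s a.
Proof.
rewrite /cost /cost0; case: a; first by rewrite subrr mul0r.
rewrite subr0 mul1r; case: ifP => _; first exact: ltW.
apply: mulr_ge0; last exact: ltW.
apply: mulr_ge0; first exact: ltW.
by apply: pinv_ge0 => //; exact: hHpos.
Qed.

Lemma trans_ge0 (s : state P) a s' : 0 <= trans s a s'.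
Proof.
apply: mulr_ge0; first by rewrite mulr_ge0 // invr_ge0 ler0n.
by apply/fine_ge0/integral_ge0 => e _; rewrite lee_fin.
Qed.

Lemma eps_of_ge0 (s : state P) : 0 <= eps_of s.
Proof.
apply: mulr_ge0; last by rewrite invr_ge0 mulr_ge0 // ler0n.
by rewrite mulr_ge0 ?addr_ge0 ?mulr_ge0 ?ler0n // ltW.
Qed.

Definition post_energy (s : state P) (a : bool) : R :=
  eps_of s - (a : nat)%:R * pinvH s * tau P.

Lemma post_energy_ge0 (s : state P) a : allowed s a -> 0 <= post_energy s a.
Proof.
rewrite /post_energy; case: a; last by rewrite !mul0r subr0 eps_of_ge0.
rewrite /allowed /= le_min mul1r subr_ge0 => /andP[le_eps _].
by rewrite -ler_pdivlMr.
Qed.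

Lemma ustar_remE n (s : state P) : ustar_rem n s =
  if allowed s true then Num.min (qval n s false) (qval n s true)
  else qval n s false.
Proof. by case: n. Qed.

Lemma qvalS n (s : state P) a : qval n.+1 s a =
  cost s a + \sum_(s' : state P) trans s a s' * ustar_rem n s'.
Proof. by []. Qed.

Lemma ustar_rem_ge0 n (s : state P) : 0 <= ustar_rem n s.
Proof.
elim: n s => [|n IH] s; rewrite ustar_remE.
  by case: ifP => _; [rewrite le_min; apply/andP; split |]; exact: cost_ge0.
have qval_ge0 a : 0 <= qval n.+1 s a.
  rewrite qvalS; apply: addr_ge0; first exact: cost_ge0.
  by apply: sumr_ge0 => s' _; apply: mulr_ge0; [exact: trans_ge0 | exact: IH].
by case: ifP => _; [rewrite le_min; apply/andP; split |]; exact: qval_ge0.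
Qed.

Lemma sum_state (F : state P -> R) :
  \sum_(s : state P) F s =
  \sum_(m : 'I_(M P)) \sum_(g : 'I_(K P)) \sum_(h : 'I_(K P)) F (m, g, h).
Proof. by rewrite pair_big /= pair_big /=; apply: eq_big => // -[[m g] h]. Qed.

Definition channel_avg (u : state P -> R) (m : 'I_(M P)) : R :=
  (K P)%:R^-1 * (K P)%:R^-1 *
  \sum_(g : 'I_(K P)) \sum_(h : 'I_(K P)) u (m, g, h).

Lemma sum_trans (s : state P) a (u : state P -> R) :
  \sum_(s' : state P) trans s a s' * u s' =
  \sum_(m : 'I_(M P))
    probEH P (level_set (post_energy s a) m) * channel_avg u m.
Proof.
rewrite sum_state; apply: eq_bigr => m _; rewrite /channel_avg !mulr_sumr.
apply: eq_bigr => g _; rewrite !mulr_sumr; apply: eq_bigr => h _.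
by rewrite mulrCA mulrA.
Qed.

Definition battery_antitone (u : state P -> R) : Prop :=
  forall (m1 m2 : 'I_(M P)) g h, (m1 <= m2)%N -> u (m2, g, h) <= u (m1, g, h).

Lemma sum_trans_le (s1 s2 : state P) a (u : state P -> R) :
  (forall s, 0 <= u s) -> battery_antitone u ->
  0 <= post_energy s1 a -> post_energy s1 a <= post_energy s2 a ->
  \sum_(s' : state P) trans s2 a s' * u s' <=
  \sum_(s' : state P) trans s1 a s' * u s'.
Proof.
move=> u_ge0 u_anti post1_ge0 le_post.
rewrite [leLHS]sum_trans [leRHS]sum_trans.
apply: expected_level_antitone => // [m | m1 m2 le_m]; rewrite /channel_avg.
  apply: mulr_ge0; first by rewrite mulr_ge0 // invr_ge0 ler0n.
  by do 2!apply: sumr_ge0 => ? _.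
apply: ler_wpM2l; first by rewrite mulr_ge0 // invr_ge0 ler0n.
by do 2!apply: ler_sum => ? _; exact: u_anti.
Qed.

Lemma qval_le n (s1 s2 : state P) a :
  (forall k, (k < n)%N -> battery_antitone (ustar_rem k)) ->
  cost s2 a <= cost s1 a -> allowed s1 a ->
  post_energy s1 a <= post_energy s2 a -> qval n s2 a <= qval n s1 a.
Proof.
case: n => [|n] u_anti le_cost al1 le_post; first exact: le_cost.
rewrite [leLHS]qvalS [leRHS]qvalS; apply: lerD; first exact: le_cost.
apply: sum_trans_le.
- exact: ustar_rem_ge0.
- exact: u_anti (ltnSn n).
- exact: post_energy_ge0.
- exact: le_post.
Qed.

Lemma le_if_min (b1 b2 : bool) (x1 y1 x2 y2 : R) :
  (b1 -> b2) -> x2 <= x1 -> (b1 -> y2 <= y1) ->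
  (if b2 then Num.min x2 y2 else x2) <= (if b1 then Num.min x1 y1 else x1).
Proof.
case: b1 => [/(_ isT) -> le_x /(_ isT) le_y | _ le_x _]; first exact: le_min2.
by case: b2; rewrite // ge_min le_x.
Qed.

Lemma le_pinvH (s1 s2 : state P) : gH_of s1 <= gH_of s2 -> pinvH s2 <= pinvH s1.
Proof. by move=> le_gamma; apply: le_pinv => //; exact: hHpos. Qed.

Lemma allowed_assign_mono (s1 s2 : state P) :
  eps_of s1 <= eps_of s2 -> pinvH s2 <= pinvH s1 ->
  allowed s1 true -> allowed s2 true.
Proof.
rewrite /allowed /= => le_eps le_p /(le_trans le_p)/le_trans; apply.
apply: le_min2 => //; apply: ler_wpM2r => //.
by rewrite invr_ge0 ltW.
Qed.

Lemma post_energy_le (s1 s2 : state P) a :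
  eps_of s1 <= eps_of s2 -> pinvH s2 <= pinvH s1 ->
  post_energy s1 a <= post_energy s2 a.
Proof.
move=> le_eps le_p; rewrite /post_energy lerB //.
apply: ler_wpM2r; first exact: ltW.
by apply: ler_wpM2l => //; rewrite ler0n.
Qed.

Lemma ustar_rem_battery_antitone n : battery_antitone (ustar_rem n).
Proof.
elim/ltn_ind: n => n IH m1 m2 g h le_m.
have le_eps : eps_of (m1, g, h) <= eps_of (m2, g, h).
  by rewrite /eps_of /= ler_eps_lev.
have le_qval a :
    allowed (m1, g, h) a -> qval n (m2, g, h) a <= qval n (m1, g, h) a.
  by move=> al1; apply: qval_le => //; exact: post_energy_le.
rewrite [leLHS]ustar_remE [leRHS]ustar_remE; apply: le_if_min.
- exact: allowed_assign_mono.
- exact: le_qval.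
- exact: le_qval.
Qed.

Lemma qval_idle_channel_indep n (m : 'I_(M P)) g h1 h2 :
  qval n (m, g, h1) false = qval n (m, g, h2) false.
Proof.
case: n => [|n]; first exact: erefl.
rewrite [LHS]qvalS [RHS]qvalS [in LHS]sum_trans [in RHS]sum_trans.
by rewrite /post_energy !mul0r !subr0.
Qed.

Lemma optimal_assign_channel_mono i (m : 'I_(M P)) g h1 h2 :
  Hlev h1 <= Hlev h2 -> optimal i (m, g, h1) true -> optimal i (m, g, h2) true.
Proof.
rewrite /optimal /ustar; set n := (N P - i)%N => le_h [al1].
have le_p : pinvH (m, g, h2) <= pinvH (m, g, h1) by exact: le_pinvH.
have al2 : allowed (m, g, h2) true by exact: allowed_assign_mono al1.
rewrite [ustar_rem _ _]ustar_remE al1 => /esym/min_idPr assign1.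
split => //; rewrite ustar_remE al2.
apply/esym/min_idPr; rewrite (qval_idle_channel_indep n m g h2 h1).
apply: le_trans assign1; apply: qval_le => //.
- by move=> k _; exact: ustar_rem_battery_antitone.
- exact: post_energy_le.
Qed.

End EnergyHarvestingMDP.

Theorem proposition3 (R : realType) (P : mdp R)
  (hN : (0 < N P)%N) (htau : 0 < tau P) (hBm : 0 < Bm P)
  (hM : (0 < M P)%N) (hK : (0 < K P)%N)
  (hHpos : forall j : 'I_(K P), 0 < Hlev j)
  (hHinc : forall j k : 'I_(K P), (j < k)%N -> Hlev j < Hlev k)
  (hRr : 0 < Rr P) (hW : 0 < W P) (hsig : 0 < sigma2 P) (hg0 : 0 < g0 P)
  (htheta : 0 < theta P) (hdG : 0 < dG P) (hdH : 0 < dH P)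
  (hpG : 0 < pGmax P) (hpH : 0 < pHmax P) (hwG : 0 < wG P) (hwD : 0 < wD P)
  (hEm : 0 < Em P)
  (hfmeas : measurable_fun setT (fEH P))
  (hfpos : forall x, 0 <= fEH P x)
  (hfsupp : forall x, ~ (0 <= x <= Em P) -> fEH P x = 0)
  (hfint : (\int[@lebesgue_measure R]_(x in supp_int (Em P)) (fEH P x)%:E = 1)%E)
  (i : nat) (hi : (1 <= i <= N P)%N)
  (m : 'I_(M P)) (g hm hp : 'I_(K P))
  (hle : Hlev hm <= Hlev hp) :
  @optimal R P i (m, g, hm) true -> @optimal R P i (m, g, hp) true.
Proof. exact: optimal_assign_channel_mono. Qed.
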